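(* Let $A=[1,1,\dots,1]\in\mathbb R^{1\times N}$, $\vec w\in\mathbb R^N$ with $\sum_{i=1}^N w_i>0$, $b=A\vec w$, and let $\vec x$ be the minimizer of $\frac12\|\vec x-\vec w\|_2^2$ over $\vec x\in\mathbb R^N$ subject to $A\vec x=b$ and $x_i\ge0$ for all $i$. If $w_{i_1}\ge w_{i_2}>0$, then $x_{i_1}=0$ implies $x_{i_2}=0$. *)

From mathcomp Require Import all_boot all_order all_algebra.
From mathcomp Require Import reals.
Set Implicit Arguments. Unset Strict Implicit. Unset Printing Implicit Defensive.
Import Order.TTheory GRing.Theory Num.Theory.
Local Open Scope ring_scope.

Definition Aones (R : realType) (N : nat) : 'M[R]_(1, N) := const_mx 1.

Definition obj (R : realType) (N : nat) (w x : 'cV[R]_N) : R :=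
  2^-1 * \sum_(i < N) (x i 0 - w i 0) ^+ 2.

Definition feasible (R : realType) (N : nat) (w x : 'cV[R]_N) : Prop :=
  Aones R N *m x = Aones R N *m w /\ forall i, 0 <= x i 0.

Definition is_minimizer (R : realType) (N : nat) (w x : 'cV[R]_N) : Prop :=
  feasible w x /\ forall y, feasible w y -> obj w x <= obj w y.

(* Moving mass t from a coordinate j to a coordinate i keeps a point feasible
   as long as 0 <= t <= x_j, and changes the objective by
   t (t + (x_i - w_i) - (x_j - w_j)).  Hence at a minimizer every coordinate
   j in the support minimizes the shift x_k - w_k.  If x_{i1} = 0 < x_{i2},
   this gives x_{i2} - w_{i2} <= - w_{i1}, i.e. x_{i2} <= w_{i2} - w_{i1} <= 0. *)

From mathcomp Require Import all_boot all_order all_algebra.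
From mathcomp Require Import reals.
From mathcomp Require Import lra.
Import Order.TTheory GRing.Theory Num.Theory.
Local Open Scope ring_scope.

Lemma bigD2 {R : nmodType} {I : finType} {i j : I} (F : I -> R) : i != j ->
  \sum_k F k = F i + F j + \sum_(k | (k != i) && (k != j)) F k.
Proof.
move=> neq_ij; rewrite (bigD1 i) //= (bigD1 j) 1?eq_sym //= addrA.
by congr (_ + _); apply: eq_bigl => k; rewrite andbC.
Qed.

Section Transfer.

Context {R : realType} {N : nat}.
Implicit Types (w x : 'cV[R]_N) (i j k : 'I_N) (t : R).

Definition transfer x i j t : 'cV[R]_N := x + t *: (delta_mx i 0 - delta_mx j 0).

Lemma transferE x i j t k :
  transfer x i j t k 0 = x k 0 + t * ((k == i)%:R - (k == j)%:R).
Proof. by rewrite !mxE !andbT. Qed.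

Lemma Aones_transfer x i j t : Aones R N *m transfer x i j t = Aones R N *m x.
Proof.
rewrite mulmxDr -scalemxAr mulmxBr -!colE.
have -> : col i (Aones R N) = col j (Aones R N) by rewrite /Aones !col_const.
by rewrite subrr scaler0 addr0.
Qed.

Lemma transfer_ge0 x i j t : (forall k, 0 <= x k 0) -> 0 <= t <= x j 0 ->
  forall k, 0 <= transfer x i j t k 0.
Proof.
move=> x_ge0 /andP[t_ge0 t_le] k; rewrite transferE.
have := x_ge0 k; case: eqP => [->|_]; case: eqP => [->|_] /=; lra.
Qed.

Lemma obj_transfer w x i j t : i != j ->
  obj w (transfer x i j t) =
  obj w x + t * (t + ((x i 0 - w i 0) - (x j 0 - w j 0))).
Proof.
move=> neq_ij; rewrite /obj !(bigD2 _ neq_ij) !transferE !eqxx.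
rewrite (negPf neq_ij) eq_sym (negPf neq_ij).
rewrite (eq_bigr (fun k => (x k 0 - w k 0) ^+ 2)); last first.
  by move=> k /andP[ki kj]; rewrite transferE (negPf ki) (negPf kj) subrr mulr0 addr0.
rewrite /=; lra.
Qed.

Lemma minimizer_shift_le w x i j : is_minimizer w x -> 0 < x j 0 ->
  x j 0 - w j 0 <= x i 0 - w i 0.
Proof.
move=> [[sum_x x_ge0] x_min] x_j_gt0.
have [<-//|neq_ij] := eqVneq i j.
rewrite leNgt; apply/negP => gap_lt0.
set d := x i 0 - w i 0 - (x j 0 - w j 0).
have d_lt0 : d < 0 by rewrite /d; lra.
(* [t <= x_j] keeps the transfer feasible, [t <= - d / 2] makes [t * (t + d)] negative. *)
pose t := Num.min (x j 0) (- d / 2).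
have t_gt0 : 0 < t by rewrite lt_min x_j_gt0 /=; lra.
have t_le_xj : t <= x j 0 by rewrite ge_min lexx.
have t_le_d : t <= - d / 2 by rewrite ge_min lexx orbT.
have feas : feasible w (transfer x i j t).
  split; first by rewrite Aones_transfer sum_x.
  by apply: transfer_ge0 => //; rewrite t_le_xj ltW.
have := x_min _ feas; rewrite obj_transfer // -/d lerDl pmulr_rge0 //.
lra.
Qed.

End Transfer.

Theorem lemma4 (R : realType) (N : nat) (w x : 'cV[R]_N) (i1 i2 : 'I_N) :
  0 < \sum_(i < N) w i 0 ->
  is_minimizer w x ->
  w i2 0 <= w i1 0 -> 0 < w i2 0 ->
  x i1 0 = 0 -> x i2 0 = 0.
Proof.
move=> _ x_min w21 _ x1_eq0.
have [_ x_ge0] := x_min.1.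
have := x_ge0 i2; rewrite le_eqVlt => /orP[/eqP<- //|x2_gt0].
have := minimizer_shift_le _ _ i1 _ x_min x2_gt0; rewrite x1_eq0; lra.
Qed.
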